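(* Let $G=(U,\alpha)$ and $H=(V,\beta)$ be graphs. Then $G$ and $H$ are strongly disjoint if and only if the joining constraint space $\mathcal{N}(G,H)$ has dimension $1$.
   Context: A weight function on finite $U$ is $\alpha:U\times U\to\mathbb{R}$, $\alpha\ge0$, symmetric, summing to $1$; degree $p(u)=\sum_{u'}\alpha(u,u')$; a graph is $G=(U,\alpha)$. Let $S=\{((u,v),(u',v'))\in(U\times V)^2:\alpha(u,u')>0,\ \beta(v,v')>0\}$. The joining constraint space $\mathcal{N}(G,H)$ is the null space of the joining constraint matrix, i.e. the real vector space of functions $\gamma:S\to\mathbb{R}$ (extended by $0$ outside $S$), with $r(u,v)=\sum_{(u',v')}\gamma((u,v),(u',v'))$ and $T=\sum_{(u,v)}r(u,v)$, satisfying the linear equations: $\gamma((u,v),(u',v'))=\gamma((u',v'),(u,v))$; $\sum_v r(u,v)=p(u)T$ for each $u$; $\sum_u r(u,v)=q(v)T$ for each $v$ (where $q$ is the degree of $\beta$); and $p(u)\sum_{y}\gamma((u,v),(u',y))=\alpha(u,u')r(u,v)$, $q(v)\sum_x\gamma((u,v),(x,v'))=\beta(v,v')r(u,v)$ for all $u,u'\in U$, $v,v'\in V$. A weight joining of $\alpha,\beta$ is a weight function $\gamma$ on $U\times V$ satisfying: degree $r$ has marginals $\sum_v r(u,v)=p(u)$, $\sum_u r(u,v)=q(v)$, and the two transition equations above. $G,H$ are strongly disjoint if the only weight joining is $\alpha\otimes\beta$, $(\alpha\otimes\beta)((u,v),(u',v'))=\alpha(u,u')\beta(v,v')$. *)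

From HB Require Import structures.
From mathcomp Require Import all_boot all_order all_algebra.
From mathcomp Require Import reals.
From mathcomp Require Import ring.
Set Implicit Arguments. Unset Strict Implicit. Unset Printing Implicit Defensive.
Import Order.TTheory GRing.Theory Num.Theory.
Local Open Scope ring_scope.

Section Joinings.
Variable R : realType.

Definition weight_function (U : finType) (a : U -> U -> R) : Prop :=
  (forall u u', 0 <= a u u') /\ (forall u u', a u u' = a u' u) /\
  (\sum_(u : U) \sum_(u' : U) a u u' = 1).

Definition degree (U : finType) (a : U -> U -> R) (u : U) : R :=
  \sum_(u' : U) a u u'.

Variables (U V : finType) (alpha : U -> U -> R) (beta : V -> V -> R).

Let p := degree alpha.
Let q := degree beta.

Definition wtensor (x y : U * V) : R := alpha x.1 y.1 * beta x.2 y.2.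

Definition weight_joining (g : U * V -> U * V -> R) : Prop :=
  let r := degree g in
  [/\ weight_function g,
      (forall u, \sum_(v : V) r (u, v) = p u),
      (forall v, \sum_(u : U) r (u, v) = q v),
      (forall u u' v, p u * \sum_(y : V) g (u, v) (u', y) = alpha u u' * r (u, v))
    & (forall u v v', q v * \sum_(x : U) g (u, v) (x, v') = beta v v' * r (u, v))].

Definition strongly_disjoint : Prop :=
  forall g, weight_joining g -> forall x y, g x y = wtensor x y.

Definition Sset : pred ((U * V) * (U * V)) :=
  fun z => (0 < alpha z.1.1 z.2.1) && (0 < beta z.1.2 z.2.2).

(* Index set of the linear constraints defining N(G,H):
   vanishing outside S, symmetry, the two marginal equations and the two
   transition equations. *)
Definition cidx : finType :=
  (((U * V) * (U * V)) + ((U * V) * (U * V)) + U + V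
    + ((U * V) * U) + ((U * V) * V))%type.

Definition joining_constraints
  (g : {ffun (U * V) * (U * V) -> R^o}) : {ffun cidx -> R^o} :=
  let G x y := g (x, y) in
  let r x := \sum_(y : U * V) G x y in
  let T := \sum_(x : U * V) r x in
  [ffun c : cidx =>
    match c with
    | inl (inl (inl (inl (inl z)))) => if Sset z then 0 else g z
    | inl (inl (inl (inl (inr z)))) => g z - g (z.2, z.1)
    | inl (inl (inl (inr u))) => \sum_(v : V) r (u, v) - p u * T
    | inl (inl (inr v)) => \sum_(u : U) r (u, v) - q v * T
    | inl (inr (uv, u')) =>
        p uv.1 * \sum_(y : V) G uv (u', y) - alpha uv.1 u' * r uv
    | inr (uv, v') =>
        q uv.2 * \sum_(x : U) G uv (x, v') - beta uv.2 v' * r uv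
    end].



(* Sanity check: the constraint map is linear, so the kernel below is the
   genuine null space of the joining constraint matrix. *)
Lemma joining_constraints_linear : linear joining_constraints.
Proof.
move=> a g h.
have sc (x : R^o) : a *: x = a * x by [].
have S2 (I : finType) (F G : I -> R) : \sum_i (a * F i + G i) = a * \sum_i F i + \sum_i G i.
  by rewrite big_split /= mulr_sumr.
apply/ffunP; case=> [[[[[z|z]|u]|v]|[uv u']]|[uv v']]; rewrite /joining_constraints !ffunE /= ?sc.
- by case: (Sset z); rewrite ?mulr0 ?addr0.
- ring.
- under eq_bigr do under eq_bigr do rewrite !ffunE sc.
  under eq_bigr do rewrite S2. rewrite S2.
  under [X in _ - _ * X]eq_bigr do under eq_bigr do rewrite !ffunE sc.
  under [X in _ - _ * X]eq_bigr do rewrite S2. rewrite S2. ring.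
- under eq_bigr do under eq_bigr do rewrite !ffunE sc.
  under eq_bigr do rewrite S2. rewrite S2.
  under [X in _ - _ * X]eq_bigr do under eq_bigr do rewrite !ffunE sc.
  under [X in _ - _ * X]eq_bigr do rewrite S2. rewrite S2. ring.
- under eq_bigr do rewrite !ffunE sc. rewrite S2.
  under [X in _ - _ * X]eq_bigr do rewrite !ffunE sc. rewrite S2. ring.
- under eq_bigr do rewrite !ffunE sc. rewrite S2.
  under [X in _ - _ * X]eq_bigr do rewrite !ffunE sc. rewrite S2. ring.
Qed.

(* The joining constraint space N(G,H): the null space of the joining
   constraint matrix, as a subspace of the real functions on (U x V)^2
   (functions are extended by 0 outside S). *)
Definition joining_constraint_space : {vspace {ffun (U * V) * (U * V) -> R^o}} :=
  lker (linfun joining_constraints).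

End Joinings.

From HB Require Import structures.
From mathcomp Require Import all_boot all_order all_algebra.
From mathcomp Require Import reals boolp ring lra.
Set Implicit Arguments. Unset Strict Implicit. Unset Printing Implicit Defensive.
Import Order.TTheory GRing.Theory Num.Theory.
Local Open Scope ring_scope.

(* The tensor alpha (x) beta is a weight joining, and weight joinings are
   exactly the nonnegative elements of N(G,H) of total mass 1.  If N(G,H) is
   the line through the tensor, the mass normalisation therefore forces every
   joining to be the tensor.  Conversely, every element of N(G,H) vanishes off
   S, where the tensor is strictly positive; so once an element g has been
   shifted to mass 0 by a multiple of the tensor, tensor + e g is still a
   joining for small e > 0.  Strong disjointness makes it equal to the tensor,
   hence g is a multiple of the tensor and N(G,H) is a line. *)

Lemma dimv_eq1_line (K : fieldType) (vT : vectType K) (W : {vspace vT}) (w : vT) :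
  w \in W -> w != 0 -> (\dim W == 1)%N = (W <= <[w]>)%VS.
Proof.
move=> wW w_neq0; have lineW : (<[w]> <= W)%VS by rewrite -memvE.
apply/eqP/idP => [dimW1 | WsubL].
  have /eqP <- : <[w]>%VS == W by rewrite eqEdim lineW dim_vline w_neq0 dimW1.
  exact: subvv.
have -> : W = <[w]>%VS by apply/eqP; rewrite eqEsubv WsubL lineW.
by rewrite dim_vline w_neq0.
Qed.

Lemma perturbation_ge0 (R : realFieldType) (T : finType) (f g : T -> R) :
    (forall z, 0 <= f z) -> (forall z, f z = 0 -> g z = 0) ->
  exists2 e, 0 < e & forall z, 0 <= f z + e * g z.
Proof.
move=> f_ge0 supp_g.
have norm1_gt0 z : 0 < `|g z| + 1 by rewrite ltr_wpDl.
pose e := \big[Num.min/1]_(z | f z != 0) (f z / (`|g z| + 1)).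
have e_gt0 : 0 < e.
  apply: (big_ind (fun x => 0 < x)) => // [x y x_gt0 y_gt0|z fz_neq0].
    by rewrite lt_min x_gt0 y_gt0.
  by rewrite divr_gt0 // lt_def fz_neq0 f_ge0.
exists e => // z; have [fz0|fz_neq0] := eqVneq (f z) 0.
  by rewrite fz0 supp_g // mulr0 addr0.
have e_le : e * (`|g z| + 1) <= f z.
  by rewrite -ler_pdivlMr // /e (bigD1 z) //= ge_min lexx.
have : - g z <= `|g z| by rewrite -normrN ler_norm.
nra.
Qed.

Lemma degree_ge0 (R : realType) (U : finType) (a : U -> U -> R) u :
  (forall u u', 0 <= a u u') -> 0 <= degree a u.
Proof. by move=> a_ge0; apply: sumr_ge0 => u' _. Qed.

Section ConstraintSpace.
Variables (R : realType) (U V : finType) (alpha : U -> U -> R) (beta : V -> V -> R).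
Hypotheses (hG : weight_function alpha) (hH : weight_function beta).

Local Notation FT := {ffun (U * V) * (U * V) -> R^o}.
Local Notation N := (joining_constraint_space alpha beta).

HB.instance Definition _ := GRing.isLinear.Build R _ _ _ (joining_constraints alpha beta)
  (joining_constraints_linear alpha beta).

Lemma joining_constraint_spaceP g :
  g \in N <-> forall c, joining_constraints alpha beta g c = 0.
Proof.
rewrite memv_ker lfunE; split=> [/eqP-> c|g0]; first by rewrite ffunE.
by apply/eqP/ffunP=> c; rewrite g0 ffunE.
Qed.

Definition mass (g : FT) : R := \sum_z g z.

Lemma massE g : mass g = \sum_x \sum_y g (x, y).
Proof. by rewrite pair_bigA; apply: eq_bigr => -[]. Qed.

Lemma massD g h : mass (g + h) = mass g + mass h.
Proof. by rewrite /mass -big_split; apply: eq_bigr => z _; rewrite ffunE. Qed.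

Lemma massZ k g : mass (k *: g) = k * mass g.
Proof. by rewrite /mass mulr_sumr; apply: eq_bigr => z _; rewrite ffunE. Qed.

Lemma joining_constraint_supp g x y :
  g \in N -> ~~ Sset alpha beta (x, y) -> g (x, y) = 0.
Proof.
move=> /joining_constraint_spaceP/(_ (inl (inl (inl (inl (inl (x, y))))))).
by rewrite ffunE /= => + /negbTE S0; rewrite S0.
Qed.

Lemma weight_joining_supp g x y :
  weight_joining alpha beta g -> ~~ Sset alpha beta (x, y) -> g x y = 0.
Proof.
case: hG hH => [a_ge0 _] [b_ge0 _]; move: x y => [u v] [u' v'].
case=> [[g_ge0 _] margU margV transU transV].
have r_ge0 z : 0 <= degree g z by exact: degree_ge0.
have g_eq0_of_r : degree g (u, v) = 0 -> g (u, v) (u', v') = 0.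
  by move=> r0; apply: (psumr_eq0P (fun y _ => g_ge0 (u, v) y) r0).
rewrite /Sset /= negb_and -!leNgt => /orP[a0|b0].
  have a_eq0 : alpha u u' = 0 by apply: le_anti; rewrite a0 a_ge0.
  have := transU u u' v; rewrite a_eq0 mul0r.
  move=> /eqP; rewrite mulf_eq0 => /orP[/eqP pu0|/eqP sum0].
    apply: g_eq0_of_r; move: (margU u); rewrite pu0.
    by move/(psumr_eq0P (fun v _ => r_ge0 (u, v)))/(_ v isT).
  exact: (psumr_eq0P (fun y _ => g_ge0 (u, v) (u', y)) sum0).
have b_eq0 : beta v v' = 0 by apply: le_anti; rewrite b0 b_ge0.
have := transV u v v'; rewrite b_eq0 mul0r.
move=> /eqP; rewrite mulf_eq0 => /orP[/eqP qv0|/eqP sum0].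
  apply: g_eq0_of_r; move: (margV v); rewrite qv0.
  by move/(psumr_eq0P (fun u _ => r_ge0 (u, v)))/(_ u isT).
exact: (psumr_eq0P (fun x _ => g_ge0 (u, v) (x, v')) sum0).
Qed.

Lemma weight_joiningP (g : FT) :
  weight_joining alpha beta (fun x y => g (x, y)) <->
  [/\ g \in N, forall z, 0 <= g z & mass g = 1].
Proof.
split=> [J | [gN g_ge0 g_mass]].
  have g_supp := weight_joining_supp J.
  case: J => [[g_ge0 [g_sym g_mass]] margU margV transU transV].
  have g_mass1 : mass g = 1 by rewrite massE.
  split=> //; last by case=> x y; exact: g_ge0.
  apply/joining_constraint_spaceP.
  case=> [[[[[[x y]|[x y]]|u]|v]|[[u v] u']]|[[u v] v']];
    rewrite ffunE /=; try (apply/eqP; rewrite subr_eq0 -?massE ?g_mass1 ?mulr1; apply/eqP).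
  - by case: ifP => // /negbT /g_supp.
  - exact: g_sym.
  - exact: margU.
  - exact: margV.
  - exact: transU.
  - exact: transV.
have c_eq c : joining_constraints alpha beta g c = 0.
  exact: (joining_constraint_spaceP g).1 gN c.
have g_sum1 : \sum_x \sum_y g (x, y) = 1 by rewrite -massE.
split; first split=> [x y|]; first exact: g_ge0.
- split=> [x y|//].
  by move/eqP: (c_eq (inl (inl (inl (inl (inr (x, y))))))); rewrite ffunE subr_eq0 => /eqP.
- move=> u; move/eqP: (c_eq (inl (inl (inl (inr u))))).
  by rewrite ffunE /= g_sum1 mulr1 subr_eq0 => /eqP.
- move=> v; move/eqP: (c_eq (inl (inl (inr v)))).
  by rewrite ffunE /= g_sum1 mulr1 subr_eq0 => /eqP.
- move=> u u' v; move/eqP: (c_eq (inl (inr ((u, v), u')))).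
  by rewrite ffunE /= subr_eq0 => /eqP.
- move=> u v v'; move/eqP: (c_eq (inr ((u, v), v'))).
  by rewrite ffunE /= subr_eq0 => /eqP.
Qed.

Lemma weight_joining_wtensor : weight_joining alpha beta (wtensor alpha beta).
Proof.
case: hG hH => [a_ge0 [a_sym a_mass]] [b_ge0 [b_sym b_mass]].
have deg x : degree (wtensor alpha beta) x = degree alpha x.1 * degree beta x.2.
  by rewrite /degree big_distrlr pair_bigA; apply: eq_bigr => -[].
split.
- split=> [x y|]; first by rewrite mulr_ge0.
  split=> [x y|]; first by rewrite /wtensor a_sym b_sym.
  under eq_bigr do rewrite -/(degree _ _) deg.
  by rewrite -[1](mulr1 1) -{1}a_mass -b_mass big_distrlr pair_bigA.
- move=> u; under eq_bigr do rewrite deg.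
  by rewrite /= -mulr_sumr b_mass mulr1.
- move=> v; under eq_bigr do rewrite deg.
  by rewrite /= -mulr_suml a_mass mul1r.
- by move=> u u' v; rewrite deg /wtensor /= -mulr_sumr /degree; ring.
- by move=> u v v'; rewrite deg /wtensor /= -mulr_suml /degree; ring.
Qed.

Definition ffun_of_weight (g : U * V -> U * V -> R) : FT := [ffun z => g z.1 z.2].

Lemma ffun_of_weightK g : (fun x y => ffun_of_weight g (x, y)) = g.
Proof. by apply/funext => x; apply/funext => y; rewrite ffunE. Qed.

Local Notation w := (ffun_of_weight (wtensor alpha beta)).

Lemma wtensor_ffun_spec : [/\ w \in N, forall z, 0 <= w z & mass w = 1].
Proof. by apply/weight_joiningP; rewrite ffun_of_weightK; exact: weight_joining_wtensor. Qed.

Lemma strongly_disjointP : strongly_disjoint alpha beta <-> (N <= <[w]>)%VS.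
Proof.
have [wN w_ge0 w_mass] := wtensor_ffun_spec.
split=> [SD | Nw _ _ g]; last first.
  rewrite -[g]ffun_of_weightK => /(weight_joiningP (ffun_of_weight g))[gN _ g_mass] x y.
  have /vlineP[k gE] := subvP Nw _ gN.
  have k1 : k = 1 by move: g_mass; rewrite gE massZ w_mass mulr1.
  by rewrite gE k1 scale1r ffunE.
apply/subvP => g gN; pose g' := (- mass g) *: w + g.
have g'N : g' \in N by rewrite memvD ?memvZ.
have w_supp z : w z = 0 -> g' z = 0.
  case: z => x y; rewrite ffunE /=.
  have [/andP[a_gt0 b_gt0]|S0] := boolP (Sset alpha beta (x, y)).
    by move=> /eqP; rewrite mulf_eq0 !gt_eqF.
  by move=> _; exact: joining_constraint_supp g'N S0.
have [e e_gt0 we_ge0] := perturbation_ge0 w_ge0 w_supp.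
have : weight_joining alpha beta (fun x y => (e *: g' + w) (x, y)).
  apply/(weight_joiningP (e *: g' + w)); split; first by rewrite memvD ?memvZ.
    by move=> z; rewrite ffunE [(e *: g') z]ffunE addrC; exact: we_ge0.
  by rewrite massD massZ massD massZ w_mass mulr1 addNr mulr0 add0r.
move/SD => hw.
have g'0 : g' = 0.
  have : e *: g' + w = 0 + w.
    by rewrite add0r; apply/ffunP => -[x y]; rewrite [w _]ffunE; exact: hw.
  by move/addIr/eqP; rewrite scaler_eq0 gt_eqF //= => /eqP.
move/eqP: g'0; rewrite /g' addrC scaleNr subr_eq0 => /eqP ->.
by rewrite memvZ ?memv_line.
Qed.

End ConstraintSpace.

Theorem proposition5p4 (R : realType) (U V : finType)
    (alpha : U -> U -> R) (beta : V -> V -> R)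
    (hG : weight_function alpha) (hH : weight_function beta) :
  strongly_disjoint alpha beta <->
  \dim (joining_constraint_space alpha beta) = 1%N.
Proof.
have [wN _ w_mass] := wtensor_ffun_spec hG hH.
have w_neq0 : ffun_of_weight (wtensor alpha beta) != 0.
  by apply: contra_eq_neq w_mass => ->; rewrite -(scale0r 0) massZ mul0r eq_sym oner_neq0.
rewrite (strongly_disjointP hG hH) -(dimv_eq1_line wN w_neq0).
by split=> [/eqP | ->].
Qed.
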